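(* Let $n, k, r \ge 1$ be integers and let $S=\{(x_i,z_i)\}_{i=1}^n$ with $x_i\in\mathbb{R}^k$ pairwise distinct and $z_i\in\mathbb{R}^r$ arbitrary. Let $d_1,d_2\ge 1$ be integers satisfying $4\lfloor d_1/4\rfloor\,\lfloor d_2/(4r)\rfloor \ge n$ (in particular $d_1d_2\ge 4nr$). Then there exist weight matrices $W_1\in\mathbb{R}^{d_1\times k}$, $W_2\in\mathbb{R}^{d_2\times d_1}$, $W_3\in\mathbb{R}^{r\times d_2}$ and bias vectors $b_1\in\mathbb{R}^{d_1}$, $b_2\in\mathbb{R}^{d_2}$, $b_3\in\mathbb{R}^{r}$ such that the three-layer ReLU network $$g_\theta(x)=W_3\,\sigma\big(W_2\,\sigma(W_1x+b_1)+b_2\big)+b_3,\qquad \sigma(t)=\max(t,0)\text{ applied entrywise},$$ satisfies $g_\theta(x_i)=z_i$ for all $i=1,\dots,n$.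
   Context: A ''three-layer ReLU network'' with hidden widths $d_1,d_2$ means a fully connected feedforward map $\mathbb{R}^k\to\mathbb{R}^r$ with two hidden layers of widths $d_1$ and $d_2$, each followed by the entrywise ReLU activation $\sigma(t)=\max(t,0)$, and a final affine (linear plus bias, no activation) output layer, as written in the claim. *)

From mathcomp Require Import all_boot all_order all_algebra.
From mathcomp Require Import reals.
Set Implicit Arguments. Unset Strict Implicit. Unset Printing Implicit Defensive.
Import Order.TTheory GRing.Theory Num.Theory.
Local Open Scope ring_scope.

Definition relu {R : realType} {m : nat} (v : 'cV[R]_m) : 'cV[R]_m :=
  map_mx (fun t => Num.max t 0) v.

Definition net3 {R : realType} {k d1 d2 r : nat}
  (W1 : 'M[R]_(d1, k)) (b1 : 'cV[R]_d1)
  (W2 : 'M[R]_(d2, d1)) (b2 : 'cV[R]_d2)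
  (W3 : 'M[R]_(r, d2)) (b3 : 'cV[R]_r) (x : 'cV[R]_k) : 'cV[R]_r :=
  W3 *m relu (W2 *m relu (W1 *m x + b1) + b2) + b3.

From mathcomp Require Import all_boot all_order all_algebra.
From mathcomp Require Import reals.
From mathcomp Require Import ring lra zify.
Import Order.TTheory GRing.Theory Num.Theory.
Local Open Scope ring_scope.
Set Implicit Arguments. Unset Strict Implicit. Unset Printing Implicit Defensive.

(* A generic linear functional maps the inputs to distinct reals; sort them as
   s 0 < s 1 < ... and cut the sorted points into S blocks of L consecutive
   points.  A pair of first-layer hinges with knots just below the first point of
   a block switches on an arbitrary affine function from that block onwards, so
   telescoping over blocks lets every second-layer unit see an arbitrary affine
   input on each block.  On block o, two second-layer units with a common steep
   slope and offsets max(h,0), max(-h,0) differ by a step of height h at any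
   chosen point of the block; summing L such steps telescopes to the targets. *)

Lemma separating_functional (R : numDomainType) (n k : nat) (x : 'I_n -> 'cV[R]_k) :
  injective x -> exists a : 'rV[R]_k, injective (fun i => (a *m x i) 0 0).
Proof.
move=> x_inj.
pose pv (v : 'cV[R]_k) : {poly R} := \sum_(j < k) v j 0 *: 'X^j.
pose a l : 'rV[R]_k := \row_j l ^+ j.
have pvE v l : (pv v).[l] = (a l *m v) 0 0.
  rewrite horner_sum !mxE; apply: eq_bigr => j _.
  by rewrite hornerZ hornerXn mxE mulrC.
have pv_neq0 v : v != 0 -> pv v != 0.
  apply: contraNneq => pv0; apply/eqP/matrixP => i j; rewrite (ord1 j) mxE.
  have := congr1 (fun q : {poly R} => q`_i) pv0.
  rewrite coef_sum coef0 (bigD1 i) //= big1 ?addr0 ?coefZ ?coefXn ?eqxx ?mulr1 //.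
  by move=> l /negbTE nl; rewrite coefZ coefXn (inj_eq val_inj) eq_sym nl mulr0.
pose P := \prod_(ij : 'I_n * 'I_n | ij.1 != ij.2) pv (x ij.1 - x ij.2).
have P_neq0 : P != 0.
  apply/prodf_neq0 => ij /= ne; apply: pv_neq0; rewrite subr_eq0.
  by apply: contra ne => /eqP/x_inj ->.
pose rs := [seq (i%:R : R) | i <- iota 0 (size P)].
have rs_uniq : uniq rs.
  by rewrite map_inj_uniq ?iota_uniq //; apply: mulrIn; rewrite oner_eq0.
have /allPn[l _ Pl_neq0] : ~~ all (root P) rs.
  apply/negP => /(max_poly_roots P_neq0)/(_ rs_uniq).
  by rewrite size_map size_iota ltnn.
exists (a l) => i j /= e; apply/eqP; apply: contraNT Pl_neq0 => ne.
rewrite /root /P horner_prod; apply/prodf_eq0; exists (i, j) => //=.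
rewrite pvE mulmxBr; set A := _ *m x i; set B := _ *m x j.
by rewrite [(A - B) 0 0]mxE [(- B) 0 0]mxE /A /B e subrr.
Qed.

Lemma rank_sort (R : realDomainType) (n : nat) (t : 'I_n -> R) : injective t ->
  exists (rho pi : 'I_n -> 'I_n) (s : nat -> R),
    [/\ cancel rho pi, {homo s : p q / (p < q)%N >-> p < q} & forall i, t i = s (rho i)].
Proof.
move=> t_inj.
have rank_lt (i : 'I_n) : (#|[pred j | (t j < t i)%R]| < n)%N.
  rewrite -[X in (_ < X)%N]card_ord; apply: proper_card; apply/properP.
  split; first exact/subset_predT.
  by exists i; rewrite ?inE ?ltxx.
pose rho i := Ordinal (rank_lt i).
have rho_mono i j : t i < t j -> (rho i < rho j)%N.
  move=> tij; apply: proper_card; apply/properP; split.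
    by apply/subsetP => l; rewrite !inE => /lt_trans; apply.
  by exists i; rewrite !inE ?ltxx.
have rho_inj : injective rho.
  move=> i j e; apply: t_inj; apply/eqP; rewrite eq_le !leNgt.
  by apply/andP; split; apply/negP => /rho_mono; rewrite e ltnn.
pose pi := invF rho_inj.
(* Past [n], [s] keeps increasing above every value of [t]. *)
pose T := \sum_i `|t i|.
have t_le_T i : t i <= T.
  rewrite /T (bigD1 i) //=; apply: le_trans (ler_norm _) _.
  by rewrite lerDl sumr_ge0.
pose s p := oapp (fun o => t (pi o)) (T + p.+1%:R) (insub p).
exists rho, pi, s; split; first exact: invF_f.
  have t_pi_mono (a b : 'I_n) : (a < b)%N -> t (pi a) < t (pi b).
    move=> ab; rewrite ltNge le_eqVlt negb_or; apply/andP; split.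
      by apply: contraTneq ab => /t_inj/(can_inj (f_invF rho_inj)) ->; rewrite ltnn.
    by apply/negP => /rho_mono; rewrite !f_invF => /(ltn_trans ab); rewrite ltnn.
  move=> p q pq; rewrite /s.
  case: insubP => [a ap aE|np]; case: insubP => [b bp bE|nq] /=.
  - by apply: t_pi_mono; rewrite aE bE.
  - by apply: le_lt_trans (t_le_T _) _; rewrite ltrDl ltr0n.
  - by move: np; rewrite (ltn_trans pq bp).
  - by rewrite ltrD2l ltr_nat ltnS.
by move=> i; rewrite /s valK /= /pi invF_f.
Qed.

Section BigNat.
Variable V : zmodType.
Implicit Types F : nat -> V.

Lemma big_ord_double F m :
  \sum_(l < m.*2) F l = \sum_(o < m) (F o.*2 + F o.*2.+1).
Proof.
elim: m => [|m IH]; first by rewrite !big_ord0.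
by rewrite doubleS !big_ord_recr /= IH addrA.
Qed.

Lemma big_ord_vanish F m d : (m <= d)%N -> (forall l, (m <= l)%N -> F l = 0) ->
  \sum_(l < d) F l = \sum_(l < m) F l.
Proof.
move=> md F0; rewrite -!(big_mkord xpredT F) (big_cat_nat (leq0n m) md) /=.
by rewrite [X in _ + X]big_nat_cond [X in _ + X]big1 ?addr0 // => l /andP[/andP[/F0]].
Qed.

Lemma big_ord_prefix F q m : (q < m)%N ->
  \sum_(o < m) (if (o <= q)%N then F o else 0) = \sum_(o < q.+1) F o.
Proof. by move=> qm; rewrite -big_mkcond /= (big_ord_widen m F qm). Qed.

Lemma big_ord_block F c L :
  \sum_(q < c * L + L) (if (q %/ L)%N == c then F q else 0) = \sum_(u < L) F (c * L + u).
Proof.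
case: (posnP L) => [->|L_gt0]; first by rewrite muln0 !big_ord0.
rewrite -(big_mkord xpredT (fun q => if (q %/ L)%N == c then F q else 0)).
rewrite (big_cat_nat (leq0n (c * L)) (leq_addr _ _)) /=.
rewrite big_nat_cond big1 ?add0r; last first.
  move=> q /andP[/andP[_ qcL] _].
  by rewrite ifN_eq // ltn_eqF // ltn_divLR.
rewrite -{1}[(c * L)%N]add0n big_addn addKn big_mkord; apply: eq_bigr => u _.
by rewrite addnC divnMDl // divn_small // addn0 eqxx.
Qed.

Definition delta F o := F o - (if o is o'.+1 then F o' else 0).

Lemma sum_delta F q : \sum_(o < q.+1) delta F o = F q.
Proof.
elim: q => [|q IH]; first by rewrite big_ord1 /delta subr0.
by rewrite big_ord_recr /= IH /delta addrC subrK.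
Qed.

End BigNat.

Lemma two_point_affine (R : fieldType) (A B c0 c1 u : R) : c0 != c1 ->
  (A * c1 + B) / (c1 - c0) * (u - c0) + (A * c0 + B) / (c0 - c1) * (u - c1) = A * u + B.
Proof.
move=> c01; have c10 : c1 - c0 != 0 by rewrite subr_eq0 eq_sym.
have c01' : c0 - c1 != 0 by rewrite subr_eq0.
by field; rewrite c10 c01'.
Qed.

Lemma max0_sub_maxN0 (R : realDomainType) (h : R) : Num.max h 0 - Num.max (- h) 0 = h.
Proof.
case: (lerP 0 h) => h0.
  by rewrite max_r ?subr0 // oppr_le0.
by rewrite max_l ?sub0r ?opprK // oppr_ge0 ltW.
Qed.

(* Both units have slope [|h|/g]: they vanish one gap [g] below [t0] and differ by [h] above it. *)
Lemma relu_pair_step (R : realFieldType) (h g t0 t : R) (b : bool) :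
  0 < g -> (if b then t0 <= t else t <= t0 - g) ->
  Num.max (`|h| / g * (t - t0) + Num.max h 0) 0
    - Num.max (`|h| / g * (t - t0) + Num.max (- h) 0) 0 = if b then h else 0.
Proof.
move=> g_gt0; have slope_ge0 : 0 <= `|h| / g by rewrite divr_ge0 ?normr_ge0 ?ltW.
have [hN_ge0 h_ge0] : Num.max (- h) 0 <= `|h| /\ Num.max h 0 <= `|h|.
  by split; rewrite ge_max normr_ge0 andbT ?ler_norm // -normrN ler_norm.
case: b => t_pos.
  have ramp_ge0 : 0 <= `|h| / g * (t - t0) by rewrite mulr_ge0 // subr_ge0.
  rewrite [X in X - _]max_l ?[X in _ - X]max_l ?addr_ge0 ?le_max ?lexx ?orbT //.
  by rewrite opprD addrACA subrr add0r max0_sub_maxN0.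
have : `|h| / g * (t - t0) <= `|h| / g * (- g) by rewrite ler_wpM2l //; lra.
rewrite mulrN divfK ?gt_eqF // => bound.
by rewrite [X in X - _]max_r ?[X in _ - X]max_r ?subrr //; lra.
Qed.

Section Interpolation.
Variable R : realFieldType.
Variable s : nat -> R.
Hypothesis s_incr : {homo s : p q / (p < q)%N >-> p < q}.

Lemma s_le p q : (p <= q)%N -> s p <= s q.
Proof. by rewrite leq_eqVlt => /predU1P[->|/s_incr/ltW]. Qed.

Definition gap p := if p is p'.+1 then s p - s p' else 1.

Lemma gap_gt0 p : 0 < gap p.
Proof. by case: p => [|p] //=; rewrite subr_gt0 s_incr. Qed.

Lemma le_sub_gap p q : (q < p)%N -> s q <= s p - gap p.
Proof. by case: p => [|p] //= qp; rewrite opprB addrC subrK s_le. Qed.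

Variable L : nat.
Hypothesis L_gt0 : (0 < L)%N.

Variable S : nat.

(* First-layer unit [l = b + 2 o] has its knot at [s (o * L)] if [b], one gap below otherwise. *)
Definition knot o (b : bool) := s (o * L) - (if b then 0 else gap (o * L)).

Definition hinge_unit l (t : R) := Num.max (t - knot l./2 (odd l)) 0.

Lemma hinge_unit_knot o (b : bool) p :
  hinge_unit (b + o.*2) (s p) = if (o * L <= p)%N then s p - knot o b else 0.
Proof.
rewrite /hinge_unit half_bit_double oddD odd_double addbF oddb.
have := gap_gt0 (o * L); rewrite /knot; case: leqP => [/s_le | /le_sub_gap] le_s g_gt0.
  by apply: max_l; case: b; lra.
by apply: max_r; case: b; lra.
Qed.

Definition hinge_weight (A B : nat -> R) l : R :=
  let o := l./2 in let c := knot o (odd l) in let c' := knot o (~~ odd l) in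
  if (o < S)%N then (delta A o * c' + delta B o) / (c' - c) else 0.

Lemma hinge_pair A B o p : (o < S)%N ->
  hinge_weight A B o.*2 * hinge_unit o.*2 (s p)
    + hinge_weight A B o.*2.+1 * hinge_unit o.*2.+1 (s p)
  = if (o * L <= p)%N then delta A o * s p + delta B o else 0.
Proof.
move=> oS; rewrite -[o.*2]/(false + o.*2)%N -[o.*2.+1]/(true + o.*2)%N !hinge_unit_knot.
rewrite /hinge_weight doubleK /= uphalf_double odd_double /= oS.
case: ifP => _; last by rewrite !mulr0 addr0.
rewrite addrC two_point_affine // /knot; have := gap_gt0 (o * L).
by apply: contraTneq => knot_eq; lra.
Qed.

Lemma hinge_layer A B d1 p : (S.*2 <= d1)%N -> (p < S * L)%N ->
  \sum_(l < d1) hinge_weight A B l * hinge_unit l (s p) = A (p %/ L)%N * s p + B (p %/ L)%N.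
Proof.
move=> Sd1 pSL; pose F l := hinge_weight A B l * hinge_unit l (s p).
rewrite (big_ord_vanish (F := F) Sd1) => [|l]; last first.
  move=> /half_leq; rewrite doubleK /F /hinge_weight leqNgt /=.
  by move=> /negbTE ->; rewrite mul0r.
rewrite (big_ord_double F) (eq_bigr (fun o : 'I_S =>
    if (o <= p %/ L)%N then delta A o * s p + delta B o else 0)) => [|o _].
  rewrite (big_ord_prefix (fun o => delta A o * s p + delta B o)) ?ltn_divLR //.
  by rewrite big_split /= -mulr_suml !sum_delta.
by rewrite /F hinge_pair // leq_divRL.
Qed.

Variable y : nat -> nat -> R.

(* Second-layer unit [j = b + 2 (c * L + u)] serves output [c] and point [u] of every block;
   on block [o] it receives [step_slope j o * t + step_intercept j o]. *)

Definition step_height j o := delta (fun u => y (j./2 %/ L)%N (o * L + u)%N) (j./2 %% L)%N.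
Definition step_point j o := (o * L + j./2 %% L)%N.
Definition step_slope j o := `|step_height j o| / gap (step_point j o).
Definition step_intercept j o :=
  Num.max (if odd j then - step_height j o else step_height j o) 0
    - step_slope j o * s (step_point j o).
Definition step_unit j p :=
  Num.max (step_slope j (p %/ L)%N * s p + step_intercept j (p %/ L)%N) 0.
Definition output_weight c j : R :=
  if (j./2 %/ L)%N == c then (if odd j then -1 else 1) else 0.

Lemma step_pair c u p : (u < L)%N ->
  step_unit (c * L + u).*2 p - step_unit (c * L + u).*2.+1 p
  = if (u <= p %% L)%N then delta (fun v => y c (p %/ L * L + v)%N) u else 0.
Proof.
move=> uL; set q := (c * L + u)%N.
have qc : (q %/ L = c)%N by rewrite divnMDl // divn_small // addn0.
have qu : (q %% L = u)%N by rewrite modnMDl modn_small.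
rewrite /step_unit /step_intercept /step_slope /step_height /step_point.
rewrite doubleK /= uphalf_double odd_double /= qc qu.
set h := delta _ u; set t0 := s (_ + u)%N; set g := gap _.
have ramp v : `|h| / g * s p + (v - `|h| / g * t0) = `|h| / g * (s p - t0) + v by ring.
rewrite !ramp; apply: relu_pair_step; first exact: gap_gt0.
rewrite /t0 /g; case: leqP => [up | pu].
  by rewrite s_le // {2}(divn_eq p L) leq_add2l.
by rewrite le_sub_gap // {1}(divn_eq p L) ltn_add2l.
Qed.

Lemma step_layer c d2 p : ((c.+1 * L).*2 <= d2)%N ->
  \sum_(j < d2) output_weight c j * step_unit j p = y c p.
Proof.
move=> cd2; pose F j := output_weight c j * step_unit j p.
rewrite (big_ord_vanish (F := F) cd2) => [|j]; last first.
  move=> /half_leq; rewrite doubleK -leq_divRL // => lt_c.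
  by rewrite /F /output_weight gtn_eqF // mul0r.
rewrite (big_ord_double F) mulSnr (eq_bigr (fun q : 'I_(c * L + L) =>
    if (q %/ L)%N == c then step_unit q.*2 p - step_unit q.*2.+1 p else 0)) => [|q _].
  rewrite (big_ord_block (fun q => step_unit q.*2 p - step_unit q.*2.+1 p)).
  rewrite (eq_bigr _ (fun u _ => step_pair c p (ltn_ord u))).
  rewrite (big_ord_prefix (fun u => delta (fun v => y c (p %/ L * L + v)%N) u)) ?ltn_pmod //.
  by rewrite sum_delta -divn_eq.
rewrite /F /output_weight doubleK /= uphalf_double odd_double /=.
by case: eqP => _; rewrite ?mul1r ?mulN1r ?mul0r ?addr0.
Qed.

End Interpolation.

Theorem mainTheorem1 (R : realType) (n k r d1 d2 : nat)
  (x : 'I_n -> 'cV[R]_k) (z : 'I_n -> 'cV[R]_r) :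
  (1 <= n)%N -> (1 <= k)%N -> (1 <= r)%N -> (1 <= d1)%N -> (1 <= d2)%N ->
  injective x ->
  (n <= 4 * (d1 %/ 4) * (d2 %/ (4 * r)))%N ->
  exists (W1 : 'M[R]_(d1, k)) (b1 : 'cV[R]_d1)
         (W2 : 'M[R]_(d2, d1)) (b2 : 'cV[R]_d2)
         (W3 : 'M[R]_(r, d2)) (b3 : 'cV[R]_r),
    forall i : 'I_n, net3 W1 b1 W2 b2 W3 b3 (x i) = z i.
Proof.
move=> n_gt0 _ r_gt0 _ _ x_inj n_le.
have d1_ge := leq_divM d1 4; have d2_ge := leq_divM d2 (4 * r).
set S := (d1 %/ 4).*2; set L := (d2 %/ (4 * r)).*2.
have nSL : (n <= S * L)%N by rewrite /S /L; nia.
have /andP[_ L_gt0] : (0 < S)%N && (0 < L)%N by rewrite -muln_gt0 (leq_trans n_gt0).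
have Sd1 : (S.*2 <= d1)%N by rewrite /S; lia.
have rLd2 : ((r * L).*2 <= d2)%N by rewrite /L; nia.
have [a a_inj] := separating_functional x_inj.
have [rho [pi [s [rhoK s_incr t_s]]]] := rank_sort a_inj.
pose y c p : R := if (insub c, insub p) is (Some c', Some q) then z (pi q) c' 0 else 0.
pose W1 : 'M[R]_(d1, k) := \matrix_(l < d1) a.
pose b1 : 'cV[R]_d1 := \col_l - knot s L l./2 (odd l).
pose W2 : 'M[R]_(d2, d1) :=
  \matrix_(j, l) hinge_weight s L S (step_slope s L y j) (step_intercept s L y j) l.
pose W3 : 'M[R]_(r, d2) := \matrix_(c, j) output_weight R L c j.
exists W1, b1, W2, 0, W3, 0 => i; apply/matrixP => c j0; rewrite (ord1 j0).
have layer1 l : relu (W1 *m x i + b1) l 0 = hinge_unit s L l (s (rho i)).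
  rewrite -t_s !mxE; congr (Num.max (_ + _) 0).
  by apply: eq_bigr => kk _; rewrite !mxE.
have layer2 j : relu (W2 *m relu (W1 *m x i + b1) + 0) j 0 = step_unit s L y j (rho i).
  rewrite /step_unit !mxE addr0 -(hinge_layer s_incr L_gt0 (step_slope s L y j)
    (step_intercept s L y j) Sd1 (leq_trans (ltn_ord _) nSL)); congr (Num.max _ 0).
  by apply: eq_bigr => l _; rewrite layer1 !mxE.
have cd2 : ((c.+1 * L).*2 <= d2)%N.
  by apply: leq_trans rLd2; rewrite leq_double leq_mul2r ltn_ord orbT.
rewrite /net3 !mxE addr0 -[z i c 0](_ : y c (rho i) = _); last by rewrite /y !valK rhoK.
rewrite -(step_layer s_incr L_gt0 y (rho i) cd2); apply: eq_bigr => j _.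
by rewrite layer2 !mxE.
Qed.
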